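(* Let $\Lambda$ be a countable index set, $\overline{a},\overline{r}$ sequences of positive reals indexed by $\Lambda$, $x^+\in\ell^1_{\overline{r}}$ and $t\in(0,1)$. The following are equivalent: (i) $x^+\in k_t$; (ii) there is $K>0$ such that $\|x^+-x\|_{\overline{r},1}+\|x^+\|_{\overline{r},1}-\|x\|_{\overline{r},1}\le K\|x^+-x\|_{\overline{a},2}^{\frac{2-2t}{2-t}}$ for all $x\in\ell^1_{\overline{r}}$; (iii) there is $K>0$ such that $\|x^+\|_{\overline{r},1}-\|x\|_{\overline{r},1}\le K\|x^+-x\|_{\overline{a},2}^{\frac{2-2t}{2-t}}$ for all $x\in\mathbb{R}^\Lambda$ with $|x_j|\le|x^+_j|$ for all $j\in\Lambda$. More precisely, (i) implies (ii) with $K=\left(2+4(2^{1-t}-1)^{-1}\right)\|x^+\|_{k_t}^{\frac{t}{2-t}}$, and if (iii) holds with constant $K$ then $\|x^+\|_{k_t}\le K^{\frac{2-t}{t}}$.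
   Context: For a sequence $\omega$ of positive reals and $p\in(0,\infty)$, $\|x\|_{\omega,p}=\left(\sum_{j\in\Lambda}\omega_j^p|x_j|^p\right)^{1/p}$ (possibly $+\infty$) and $\ell^p_\omega=\{x\in\mathbb{R}^\Lambda:\|x\|_{\omega,p}<\infty\}$. For $t\in(0,2)$, $k_t=\{x\in\mathbb{R}^\Lambda:\|x\|_{k_t}<\infty\}$ with $\|x\|_{k_t}=\sup_{\alpha>0}\alpha\left(\sum_{j\in\Lambda}\overline{a}_j^{-2}\overline{r}_j^2\mathbf{1}_{\{\overline{a}_j^{-2}\overline{r}_j\alpha<|x_j|\}}\right)^{1/t}$. *)

From HB Require Import structures.
From mathcomp Require Import all_boot all_order all_algebra.
From mathcomp Require Import all_classical all_reals all_analysis.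
Set Implicit Arguments. Unset Strict Implicit. Unset Printing Implicit Defensive.
Import Order.TTheory GRing.Theory Num.Theory.
Local Open Scope classical_set_scope.
Local Open Scope ring_scope.

Section defs.
Variables (R : realType) (L : countType).

Definition wnorm (w : L -> R) (p : R) (x : L -> R) : \bar R :=
  poweR (\esum_(j in [set: L]) ((w j `^ p * `|x j| `^ p)%:E)) p^-1.

Definition in_lp (w : L -> R) (p : R) (x : L -> R) : Prop :=
  (wnorm w p x < +oo)%E.

Definition ktnorm (a r : L -> R) (t : R) (x : L -> R) : \bar R :=
  ereal_sup [set (alpha%:E *
      poweR (\esum_(j in [set: L])
               ((a j ^- 2 * r j ^+ 2 *
                 (if a j ^- 2 * r j * alpha < `|x j| then 1 else 0))%:E))
            t^-1)%E | alpha in [set alpha : R | 0 < alpha]].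

Definition in_kt (a r : L -> R) (t : R) (x : L -> R) : Prop :=
  (ktnorm a r t x < +oo)%E.

End defs.

(* For (i) => (ii), split the indices at the threshold |x+_j| = a_j^-2 r_j alpha.
   Above it, the gap r_j (|x+_j - x_j| + |x+_j| - |x_j|) is at most
   2 r_j |x+_j - x_j| <= lam a_j^-2 r_j^2 + lam^-1 a_j^2 |x+_j - x_j|^2 (AM-GM), and
   the first sum is the level mass N(alpha) <= (||x+||_{k_t} / alpha)^t. Below it,
   the gap is at most 2 r_j |x+_j|, and grouping the indices into dyadic layers
   alpha 2^-(k+1) < a_j^2 r_j^-1 |x+_j| <= alpha 2^-k bounds this sum by a geometric
   series of ratio 2^(t-1); this is where 2^(1-t) - 1 comes from. Optimizing alpha
   and lam gives the exponent (2-2t)/(2-t).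
   For (iii) => (i), shrink the coordinates of x+ above the threshold by
   a_j^-2 r_j alpha: both sides of (iii) become multiples of N(alpha), and
   alpha N <= K (alpha^2 N)^((1-t)/(2-t)) is alpha N^(1/t) <= K^((2-t)/t). *)

From HB Require Import structures.
From mathcomp Require Import all_boot all_order all_algebra.
From mathcomp Require Import all_classical all_reals all_analysis.
From mathcomp Require Import ring lra.
Set Implicit Arguments. Unset Strict Implicit. Unset Printing Implicit Defensive.
Import Order.TTheory GRing.Theory Num.Theory.
Local Open Scope classical_set_scope.
Local Open Scope ring_scope.

Lemma ler_of_le_addr_expR (R : realType) (x y z c : R) : 0 < c -> 0 <= z ->
  (forall m : nat, x <= y + expR (- (m%:R * c)) * z) -> x <= y.
Proof.
move=> c_gt0 z_ge0 le_xy; apply/ler_addgt0Pr => e e_gt0.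
have ez_gt0 : 0 < e / (z + 1) by rewrite divr_gt0 // ltr_wpDl.
have [m m_large] : exists m : nat, `|- ln (e / (z + 1)) / c| < m%:R.
  by exists (Num.Def.archi_bound `|- ln (e / (z + 1)) / c|); apply: archi_boundP.
have small : expR (- (m%:R * c)) < e / (z + 1).
  rewrite -[X in _ < X](@lnK _ (e / (z + 1))) ?posrE // ltr_expR.
  have := le_lt_trans (ler_norm _) m_large; rewrite ltr_pdivrMr // => h; lra.
apply: le_trans (le_xy m) _; rewrite lerD2l.
apply: le_trans (ler_wpM2r z_ge0 (ltW small)) _.
by rewrite mulrAC ler_pdivrMr ?ltr_wpDl //; nra.
Qed.

Lemma gt0_powRE (R : realType) (x y : R) : 0 < x -> x `^ y = expR (y * ln x).
Proof. by move=> x_gt0; rewrite /powR gt_eqF. Qed.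

Lemma gap_ge0 (R : realDomainType) (r p x : R) : 0 <= r -> 0 <= r * (`|p - x| + `|p| - `|x|).
Proof. by move=> r_ge0; rewrite mulr_ge0 //; have := lerB_dist x p; rewrite distrC; lra. Qed.

Lemma level_le_of_gap_le (R : realType) (t al n K : R) :
  0 < t -> t < 2 -> 0 < al -> 0 < n -> 0 < K ->
  al * n <= K * ((al ^+ 2 * n) `^ 2^-1) `^ ((2 - 2 * t) / (2 - t)) ->
  al * n `^ t^-1 <= K `^ ((2 - t) / t).
Proof.
move=> t_gt0 t_lt2 al_gt0 n_gt0 K_gt0.
have t2 : 2 - t != 0 by rewrite gt_eqF // subr_gt0.
have alnE : al * n = expR (ln al + ln n) by rewrite expRD !lnK ?posrE.
have lhsE : al * n `^ t^-1 = expR (ln al + t^-1 * ln n).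
  by rewrite expRD lnK ?posrE // gt0_powRE.
have rhsE : K * ((al ^+ 2 * n) `^ 2^-1) `^ ((2 - 2 * t) / (2 - t))
    = expR (ln K + (2 - 2 * t) / (2 - t) * (2^-1 * (2 * ln al + ln n))).
  rewrite !gt0_powRE ?expR_gt0 ?mulr_gt0 ?exprn_gt0 // expRK lnM ?posrE ?exprn_gt0 //.
  rewrite lnXn // -{1}[K](@lnK _ K) ?posrE // -expRD.
  by congr expR; rewrite mulr2n; ring.
rewrite alnE rhsE lhsE gt0_powRE // !ler_expR => le_log.
have -> : ln al + t^-1 * ln n = (2 - t) / t *
    (ln al + ln n - (2 - 2 * t) / (2 - t) * (2^-1 * (2 * ln al + ln n))).
  by field; rewrite t2 gt_eqF.
apply: ler_wpM2l; first by apply: divr_ge0; rewrite ?subr_ge0 ltW.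
by move: le_log; lra.
Qed.

Lemma gap_le_split (R : realFieldType) (a r p x lam thr : R) :
  0 < a -> 0 < r -> 0 < lam ->
  r * (`|p - x| + `|p| - `|x|) <=
    lam * (a ^- 2 * r ^+ 2 * (if thr < `|p| then 1 else 0))
  + lam^-1 * (a ^+ 2 * `|p - x| ^+ 2)
  + 2 * (r * `|p| * (if `|p| <= thr then 1 else 0)).
Proof.
move=> a_gt0 r_gt0 lam_gt0.
have level_ge0 : 0 <= lam * (a ^- 2 * r ^+ 2).
  by rewrite mulr_ge0 ?mulr_ge0 ?invr_ge0 ?sqr_ge0 // ltW.
have dist_ge0 : 0 <= lam^-1 * (a ^+ 2 * `|p - x| ^+ 2).
  by rewrite mulr_ge0 ?mulr_ge0 ?invr_ge0 ?sqr_ge0 // ltW.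
have mass_ge0 : 0 <= r * `|p| by rewrite mulr_ge0 // ltW.
case: (leP `|p| thr) => _.
  have gap_le : `|p - x| - `|x| <= `|p| by have := ler_normB p x; lra.
  by have := ler_wpM2l (ltW r_gt0) gap_le; rewrite !mulr0 !mulr1 add0r; lra.
have := ler_wpM2l (ltW r_gt0) (lerB_dist p x).
have amgm : 2 * (r * `|p - x|) <=
    lam * (a ^- 2 * r ^+ 2) + lam^-1 * (a ^+ 2 * `|p - x| ^+ 2).
  have sq : 0 <= (lam * (r / a) - a * `|p - x|) ^+ 2 / lam.
    by rewrite divr_ge0 ?sqr_ge0 // ltW.
  have sqE : (lam * (r / a) - a * `|p - x|) ^+ 2 / lam =
      lam * (a ^- 2 * r ^+ 2) + lam^-1 * (a ^+ 2 * `|p - x| ^+ 2) - 2 * (r * `|p - x|).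
    by field; rewrite !gt_eqF.
  by rewrite sqE in sq; lra.
by rewrite !mulr0 !mulr1 addr0; lra.
Qed.

Definition shrink (R : realFieldType) (thr p : R) :=
  if thr < `|p| then p * (1 - thr / `|p|) else p.

Section shrink.
Variables (R : realFieldType) (thr p : R).
Hypothesis thr_ge0 : 0 <= thr.

Lemma norm_shrink : `|shrink thr p| = `|p| - thr * (if thr < `|p| then 1 else 0).
Proof.
rewrite /shrink; case: ifPn => [lt_thr|_]; last by rewrite mulr0 subr0.
have p_gt0 : 0 < `|p| := le_lt_trans thr_ge0 lt_thr.
rewrite normrM (@ger0_norm _ (1 - _)); last by rewrite subr_ge0 ler_pdivrMr // mul1r ltW.
by rewrite mulr1; field; rewrite gt_eqF.
Qed.

Lemma norm_sub_shrink : `|p - shrink thr p| = thr * (if thr < `|p| then 1 else 0).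
Proof.
rewrite /shrink; case: ifPn => [lt_thr|_]; last by rewrite subrr normr0 mulr0.
have p_gt0 : 0 < `|p| := le_lt_trans thr_ge0 lt_thr.
have -> : p - p * (1 - thr / `|p|) = p * (thr / `|p|) by ring.
by rewrite normrM (@ger0_norm _ (thr / _)) ?divr_ge0 // mulr1; field; rewrite gt_eqF.
Qed.

Lemma norm_shrink_le : `|shrink thr p| <= `|p|.
Proof. by rewrite norm_shrink lerBlDr lerDl mulr_ge0 //; case: ifP. Qed.

End shrink.

Section dyadic_layers.
Variables (R : realType) (I : Type) (s : seq I) (r w f : I -> R) (t u : R).
Hypotheses (r_gt0 : forall i, 0 < r i) (w_gt0 : forall i, 0 < w i).
Hypothesis f_ge0 : forall i, 0 <= f i.

Let upper_mass b := \sum_(i <- s) r i * w i * (if w i * expR b < f i then 1 else 0).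
Let lower_mass b := \sum_(i <- s) r i * f i * (if f i <= w i * expR b then 1 else 0).

Lemma lower_mass_shift b d : 0 <= d ->
  lower_mass b <= lower_mass (b - d) + expR b * upper_mass (b - d).
Proof.
move=> d0; rewrite /lower_mass /upper_mass mulr_sumr -big_split /=.
apply: ler_sum => i _.
have le_thr : w i * expR (b - d) <= w i * expR b.
  by apply: ler_wpM2l; [exact: ltW | rewrite ler_expR; lra].
have := r_gt0 i; have := f_ge0 i; have := expR_gt0 b.
case: (leP (f i) (w i * expR (b - d))) => [low|high].
  by rewrite (le_trans low le_thr); nra.
case: (leP (f i) (w i * expR b)) => [mid|_]; last first.
  by rewrite !mulr0 mulr1 add0r => *; rewrite !mulr_ge0 ?expR_ge0 // ltW.
have := ler_wpM2l (ltW (r_gt0 i)) mid; rewrite !mulr1 mulr0 add0r; nra.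
Qed.

Hypothesis t_lt1 : t < 1.
Hypothesis upper_mass_le : forall b, upper_mass b <= expR (t * (u - b)).

(* Iterating [lower_mass_shift] with [d = ln 2] m times leaves a remainder of
   order 2^-m, which [ler_of_le_addr_expR] discards. *)
Lemma lower_mass_le b :
  lower_mass b <= 2 / (2 `^ (1 - t) - 1) * expR (t * u + (1 - t) * b).
Proof.
set l := ln (2 : R); set P := 2 `^ (1 - t).
have l_gt0 : 0 < l by apply: ln_gt0; lra.
have eP : P = expR ((1 - t) * l) by rewrite /P gt0_powRE.
have P_gt1 : 1 < P by rewrite eP expR_gt1 mulr_gt0 // subr_gt0.
set F := fun b => 2 / (P - 1) * expR (t * u + (1 - t) * b).
have F_step b' : F (b' - l) + expR b' * expR (t * (u - (b' - l))) = F b'.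
  have -> : F (b' - l) = F b' / P.
    rewrite /F /= -[RHS]mulrA; congr (_ * _).
    by rewrite eP -expRN -expRD; congr expR; ring.
  have -> : expR b' * expR (t * (u - (b' - l))) = expR (t * u + (1 - t) * b') * (2 / P).
    rewrite eP -expRN -[2 in RHS](@lnK _ 2) ?posrE // -!expRD.
    by congr expR; rewrite /l; ring.
  by rewrite /F; field; rewrite subr_eq0 !gt_eqF // (lt_trans ltr01).
set W := \sum_(i <- s) r i * w i.
have W_ge0 : 0 <= W by rewrite sumr_ge0 // => i _; rewrite mulr_ge0 // ltW.
suff approx m b' : lower_mass b' <= F b' + expR (- (m%:R * l)) * (expR b' * W).
  apply: (ler_of_le_addr_expR l_gt0 _ (approx ^~ b)).
  by rewrite mulr_ge0 ?expR_ge0.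
elim: m b' => [|m IH] b'.
  rewrite mul0r oppr0 expR0 mul1r; apply: ler_wpDl.
    by rewrite /F mulr_ge0 ?expR_ge0 // divr_ge0 // subr_ge0 ltW.
  rewrite /lower_mass /W mulr_sumr; apply: ler_sum => i _; case: ifPn => [le_f|_].
    by rewrite mulr1 mulrCA; apply: ler_wpM2l; [exact: ltW | rewrite mulrC].
  by rewrite mulr0 mulr_ge0 ?expR_ge0 // mulr_ge0 // ltW.
apply: le_trans (lower_mass_shift b' (ltW l_gt0)) _.
have := IH (b' - l); have := upper_mass_le (b' - l).
move/(ler_wpM2l (expR_ge0 b')); rewrite -(F_step b').
have -> : expR (- (m%:R * l)) * (expR (b' - l) * W) = expR (- (m.+1%:R * l)) * (expR b' * W).
  by rewrite !mulrA -!expRD -addn1 natrD; congr (expR _ * _); ring.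
lra.
Qed.

End dyadic_layers.

Definition kt_const (R : realType) (t : R) := 2 + 4 * (2 `^ (1 - t) - 1)^-1.

Lemma kt_const_gt0 (R : realType) (t : R) : t < 1 -> 0 < kt_const t.
Proof.
move=> t_lt1; have P_gt1 : 1 < 2 `^ (1 - t).
  by rewrite gt0_powRE // expR_gt1 mulr_gt0 ?ln_gt0 // ?subr_gt0 // ltr1n.
by rewrite /kt_const ltr_wpDr // mulr_ge0 // invr_ge0 subr_ge0 ltW.
Qed.

Section finite_gap_estimate.
Variables (R : realType) (I : Type) (s : seq I) (a r p x : I -> R) (t D q : R).
Hypotheses (a_gt0 : forall i, 0 < a i) (r_gt0 : forall i, 0 < r i).
Hypotheses (t_lt1 : t < 1) (D_gt0 : 0 < D) (q_gt0 : 0 < q).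
Hypothesis level_le : forall b, \sum_(i <- s) a i ^- 2 * r i ^+ 2 *
  (if a i ^- 2 * r i * expR b < `|p i| then 1 else 0) <= expR (t * (ln D - b)).
Hypothesis dist_le : \sum_(i <- s) a i ^+ 2 * `|p i - x i| ^+ 2 <= q.

(* Split at the threshold [a^-2 r e^z] and weight the AM-GM step by [lam]; the
   values of [z] and [lam] balance the three resulting terms. *)
Lemma gap_sum_le : \sum_(i <- s) r i * (`|p i - x i| + `|p i| - `|x i|) <=
  kt_const t * D `^ (t / (2 - t)) * (q `^ 2^-1) `^ ((2 - 2 * t) / (2 - t)).
Proof.
have t2 : 2 - t != 0 by rewrite gt_eqF // subr_gt0; move: t_lt1; lra.
set u := ln D; set v := 2^-1 * ln q; set P := 2 `^ (1 - t).
set z := (2 * v - t * u) / (2 - t).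
set Y := expR ((t * u + (2 - 2 * t) * v) / (2 - t)).
set lam := expR (v - t * (u - z) / 2).
have lam_gt0 : 0 < lam := expR_gt0 _.
have YE : D `^ (t / (2 - t)) * (q `^ 2^-1) `^ ((2 - 2 * t) / (2 - t)) = Y.
  rewrite !gt0_powRE ?expR_gt0 // expRK -expRD.
  by congr expR; rewrite /u /v; field.
have lamN : lam * expR (t * (u - z)) = Y.
  by rewrite -expRD; congr expR; rewrite /z; field.
have lamQ : lam^-1 * q = Y.
  by rewrite -[q](@lnK _ q) ?posrE // -expRN -expRD; congr expR; rewrite /z /v; field.
have lowE : expR (t * u + (1 - t) * z) = Y by congr expR; rewrite /z; field.
have w_gt0 i : 0 < a i ^- 2 * r i by rewrite mulr_gt0 // invr_gt0 exprn_gt0.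
have low := @lower_mass_le _ _ s r (fun i => a i ^- 2 * r i) (fun i => `|p i|) t u
  r_gt0 w_gt0 (fun i => normr_ge0 (p i)) t_lt1.
have {}low : \sum_(i <- s) r i * `|p i| *
    (if `|p i| <= a i ^- 2 * r i * expR z then 1 else 0) <= 2 / (P - 1) * Y.
  rewrite -lowE; apply: low => b /=.
  by under eq_bigr => i _ do rewrite mulrCA -expr2; exact: level_le.
have split i := gap_le_split (p i) (x i) (a i ^- 2 * r i * expR z) (a_gt0 i) (r_gt0 i) lam_gt0.
apply: le_trans (ler_sum _ (fun i _ => split i)) _.
rewrite !big_split /= -!mulr_sumr -[X in _ <= X]mulrA YE.
have := ler_wpM2l (ltW lam_gt0) (level_le z); rewrite lamN.
have ilam_ge0 : 0 <= lam^-1 by rewrite invr_ge0 ltW.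
have := ler_wpM2l ilam_ge0 dist_le; rewrite lamQ.
have -> : kt_const t * Y = Y + Y + 2 * (2 / (P - 1) * Y) by rewrite /kt_const; ring.
lra.
Qed.

End finite_gap_estimate.

Section esum_seq.
Variables (R : realType) (T : choiceType) (f : T -> R).

Lemma esum_le_EFin (c : R) :
  (forall s : seq T, uniq s -> \sum_(i <- s) f i <= c) ->
  (\esum_(j in [set: T]) (f j)%:E <= c%:E)%E.
Proof.
move=> le_c; apply: ge_ereal_sup => _ [X [finX _] <-].
by rewrite fsumEFin // fsbig_finite // lee_fin le_c // finmap.fset_uniq.
Qed.

Lemma sum_le_esum (s : seq T) :
  uniq s -> ((\sum_(i <- s) f i)%:E <= \esum_(j in [set: T]) (f j)%:E)%E.
Proof.
move=> us; apply: esum_ge; exists [set` s]; first by split; [exact: finite_seq|].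
by rewrite fsumEFin ?finite_seq// -fsbig_seq.
Qed.

Lemma esumZl (c : R) : 0 < c -> (forall j, 0 <= f j) ->
  \esum_(j in [set: T]) (c * f j)%:E = (c%:E * \esum_(j in [set: T]) (f j)%:E)%E.
Proof.
move=> c0 f0.
have esumZ_le (k : R) (g : T -> R) : 0 < k -> (forall j, 0 <= g j) ->
    (\esum_(j in [set: T]) (k * g j)%:E <= k%:E * \esum_(j in [set: T]) (g j)%:E)%E.
  move=> k0 g0; apply: ge_ereal_sup => _ [X [finX _] <-].
  rewrite fsumEFin // fsbig_finite // -mulr_sumr EFinM lee_pmul2l ?lte_fin //.
  by rewrite -fsbig_finite // -fsumEFin //; apply: esum_ge; exists X.
apply/eqP; rewrite eq_le esumZ_le //=.
have := esumZ_le c^-1 (fun j => c * f j).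
rewrite invr_gt0 => /(_ c0 (fun j => mulr_ge0 (ltW c0) (f0 j))).
under eq_esum do rewrite mulKf ?gt_eqF //.
rewrite -(@lee_pmul2l _ c%:E) ?lte_fin // muleA -EFinM mulfV ?gt_eqF //.
by rewrite mul1e.
Qed.

End esum_seq.

Section weighted_norms.
Variables (R : realType) (L : countType) (w : L -> R).
Hypothesis w_gt0 : forall j, 0 < w j.

Lemma wnorm1E (x : L -> R) : wnorm w 1 x = \esum_(j in [set: L]) (w j * `|x j|)%:E.
Proof.
rewrite /wnorm invr1 poweRe1; last first.
  by apply: esum_ge0 => j _; rewrite lee_fin mulr_ge0 // powR_ge0.
by apply: eq_esum => j _; rewrite !powRr1 // ltW.
Qed.

Lemma wnorm2E (x : L -> R) :
  wnorm w 2 x = poweR (\esum_(j in [set: L]) (w j ^+ 2 * `|x j| ^+ 2)%:E) 2^-1.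
Proof.
rewrite /wnorm; congr poweR; apply: eq_esum => j _.
by rewrite -!powR_mulrn // ltW.
Qed.

End weighted_norms.

Definition level_mass (R : realType) (L : countType) (a r p : L -> R) (al : R) :=
  \esum_(j in [set: L])
    ((a j ^- 2 * r j ^+ 2 * (if a j ^- 2 * r j * al < `|p j| then 1 else 0))%:E).

Section kt_space.
Variables (R : realType) (L : countType) (a r : L -> R) (t : R).
Hypotheses (a_gt0 : forall j, 0 < a j) (r_gt0 : forall j, 0 < r j) (t_gt0 : 0 < t).

Lemma level_term_ge0 (p : L -> R) (al : R) j :
  0 <= a j ^- 2 * r j ^+ 2 * (if a j ^- 2 * r j * al < `|p j| then 1 else 0).
Proof. by apply: mulr_ge0; [rewrite mulr_ge0 ?invr_ge0 ?sqr_ge0 | case: ifP]. Qed.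

Lemma ktnorm_ge (p : L -> R) (al : R) :
  0 < al -> (al%:E * poweR (level_mass a r p al) t^-1 <= ktnorm a r t p)%E.
Proof. by move=> al_gt0; apply: ereal_sup_ubound; exists al. Qed.

Lemma ktnorm_gt0 (p : L -> R) (j : L) : p j != 0 -> (0 < ktnorm a r t p)%E.
Proof.
move=> pj_neq0.
have w_gt0 : 0 < a j ^- 2 * r j by rewrite mulr_gt0 // invr_gt0 exprn_gt0.
set al := `|p j| / (2 * (a j ^- 2 * r j)).
have al_gt0 : 0 < al by rewrite divr_gt0 ?normr_gt0 // mulr_gt0.
have j_above : a j ^- 2 * r j * al < `|p j|.
  have -> : a j ^- 2 * r j * al = `|p j| / 2.
    by rewrite /al; field; rewrite !gt_eqF.
  have : 0 < `|p j| by rewrite normr_gt0.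
  lra.
apply: lt_le_trans (ktnorm_ge p al_gt0); rewrite mule_gt0 ?lte_fin // poweR_gt0 //.
apply: lt_le_trans (sum_le_esum _ (isT : uniq [:: j])).
by rewrite big_seq1 j_above mulr1 lte_fin mulr_gt0 ?exprn_gt0 // invr_gt0 exprn_gt0.
Qed.

(* Thresholds are parametrized as [al = expR b], so that the weak-type bound
   [al * level_mass al ^ (1/t) <= D] becomes linear in [b] after taking logarithms. *)
Lemma level_sum_le (p : L -> R) (D : R) : 0 < D -> (ktnorm a r t p <= D%:E)%E ->
  forall s : seq L, uniq s -> forall b,
  \sum_(i <- s) a i ^- 2 * r i ^+ 2 * (if a i ^- 2 * r i * expR b < `|p i| then 1 else 0)
    <= expR (t * (ln D - b)).
Proof.
move=> D_gt0 kt_le s us b.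
set f := fun i => a i ^- 2 * r i ^+ 2 * (if a i ^- 2 * r i * expR b < `|p i| then 1 else 0).
have f_ge0 i : 0 <= f i := level_term_ge0 p (expR b) i.
have sum_le := sum_le_esum f us.
have mass_le := le_trans (ktnorm_ge p (expR_gt0 b)) kt_le.
have sum_ge0 : 0 <= \sum_(i <- s) f i by rewrite sumr_ge0.
have massE : level_mass a r p (expR b) = \esum_(j in [set: L]) (f j)%:E by [].
rewrite massE in mass_le; change (\sum_(i <- s) f i <= expR (t * (ln D - b))).
move: mass_le sum_le.
case: (\esum_(j in [set: L]) (f j)%:E) => [n| |] mass_le sum_le; last 2 first.
- by move: mass_le; rewrite poweRyr ?invr_neq0 ?gt_eqF // gt0_muley ?lte_fin ?expR_gt0.
- by move: sum_le; rewrite leeNy_eq.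
rewrite lee_fin in sum_le; rewrite poweR_EFin lee_fin in mass_le.
have [n_eq0|n_neq0] := eqVneq n 0.
  by rewrite n_eq0 in sum_le; apply: le_trans sum_le (ltW (expR_gt0 _)).
have n_gt0 : 0 < n by rewrite lt_def n_neq0 (le_trans sum_ge0 sum_le).
apply: le_trans sum_le _.
rewrite gt0_powRE // -expRD -[X in _ <= X](@lnK _ D) ?posrE // ler_expR in mass_le.
rewrite -[X in X <= _](@lnK _ n) ?posrE // ler_expR.
have := ler_wpM2l (ltW t_gt0) mass_le; rewrite mulrDr mulrA mulfV ?gt_eqF // mul1r.
by move: t_gt0; nra.
Qed.

Lemma esum_norm_shrink (p : L -> R) (al : R) : 0 < al ->
  \esum_(j in [set: L]) (r j * `|p j|)%:E =
  (\esum_(j in [set: L]) (r j * `|shrink (a j ^- 2 * r j * al) (p j)|)%:E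
   + al%:E * level_mass a r p al)%E.
Proof.
move=> al_gt0; rewrite -(esumZl al_gt0 (level_term_ge0 p al)) -esumD => [|j _|j _].
- apply: eq_esum => j _; rewrite norm_shrink ?mulr_ge0 ?invr_ge0 ?sqr_ge0 ?ltW //.
  by rewrite -EFinD; congr (_%:E); case: ifP => _; ring.
- by rewrite lee_fin mulr_ge0 // ltW.
- by rewrite lee_fin mulr_ge0 ?level_term_ge0 // ltW.
Qed.

Lemma esum_dist_shrink (p : L -> R) (al : R) : 0 < al ->
  \esum_(j in [set: L]) (a j ^+ 2 * `|p j - shrink (a j ^- 2 * r j * al) (p j)| ^+ 2)%:E =
  ((al ^+ 2)%:E * level_mass a r p al)%E.
Proof.
move=> al_gt0; rewrite -(esumZl (exprn_gt0 2 al_gt0) (level_term_ge0 p al)).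
apply: eq_esum => j _; rewrite norm_sub_shrink ?mulr_ge0 ?invr_ge0 ?sqr_ge0 ?ltW //.
congr (_%:E); case: ifP => _; last by rewrite !mulr0 expr0n mulr0.
by field; rewrite gt_eqF.
Qed.

End kt_space.

Section gap_bounds.
Variables (R : realType) (L : countType) (a r xp : L -> R).
Hypotheses (a_gt0 : forall j, 0 < a j) (r_gt0 : forall j, 0 < r j).

Definition gap_bound (e K : R) := forall x : L -> R, in_lp r 1 x ->
  (wnorm r 1 (fun j => (xp j - x j)%R) + wnorm r 1 xp - wnorm r 1 x
   <= K%:E * poweR (wnorm a 2 (fun j => (xp j - x j)%R)) e)%E.

Definition dominated_gap_bound (e K : R) := forall x : L -> R, (forall j, `|x j| <= `|xp j|) ->
  (wnorm r 1 xp - wnorm r 1 x <= K%:E * poweR (wnorm a 2 (fun j => (xp j - x j)%R)) e)%E.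

Lemma gap_bound_le (e K K' : R) : K <= K' -> gap_bound e K -> gap_bound e K'.
Proof.
move=> le_K bound x x_l1; apply: le_trans (bound x x_l1) _.
by apply: lee_wpmul2r; [exact: poweR_ge0 | rewrite lee_fin].
Qed.

Lemma gap_bound_dominated (e K : R) :
  in_lp r 1 xp -> gap_bound e K -> dominated_gap_bound e K.
Proof.
move=> xp_l1 bound x x_le; have x_l1 : in_lp r 1 x.
  apply: le_lt_trans xp_l1; rewrite !wnorm1E //.
  by apply: le_esum => j _; rewrite lee_fin ler_wpM2l // ltW.
apply: le_trans (bound x x_l1); rewrite -addeA lee_paddl // wnorm1E //.
by apply: esum_ge0 => j _; rewrite lee_fin mulr_ge0 // ltW.
Qed.

Lemma wnorm1_gap (x : L -> R) : in_lp r 1 x ->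
  (wnorm r 1 (fun j => (xp j - x j)%R) + wnorm r 1 xp - wnorm r 1 x
   = \esum_(j in [set: L]) (r j * (`|xp j - x j| + `|xp j| - `|x j|))%:E)%E.
Proof.
rewrite /in_lp !wnorm1E // => x_l1.
have nneg (y : L -> R) j : [set: L] j -> (0 <= (r j * `|y j|)%:E)%E.
  by move=> _; rewrite lee_fin mulr_ge0 // ltW.
have x_fin : \esum_(j in [set: L]) (r j * `|x j|)%:E \is a fin_num.
  by rewrite ge0_fin_numE //; apply: esum_ge0; exact: nneg.
have sumE : (\esum_(j in [set: L]) (r j * `|xp j - x j|)%:E
    + \esum_(j in [set: L]) (r j * `|xp j|)%:E
    = \esum_(j in [set: L]) (r j * (`|xp j - x j| + `|xp j| - `|x j|))%:E
    + \esum_(j in [set: L]) (r j * `|x j|)%:E)%E.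
  rewrite -!esumD; try by [exact: nneg | move=> j _; rewrite lee_fin gap_ge0 // ltW].
  by apply: eq_esum => j _; rewrite -!EFinD; congr EFin; ring.
by rewrite sumE addeK.
Qed.

Lemma esum_gap_le (t D q : R) (x : L -> R) : 0 < t -> t < 1 -> 0 < D -> 0 < q ->
  (ktnorm a r t xp <= D%:E)%E ->
  \esum_(j in [set: L]) (a j ^+ 2 * `|xp j - x j| ^+ 2)%:E = q%:E ->
  (\esum_(j in [set: L]) (r j * (`|xp j - x j| + `|xp j| - `|x j|))%:E
   <= (kt_const t * D `^ (t / (2 - t)) * (q `^ 2^-1) `^ ((2 - 2 * t) / (2 - t)))%:E)%E.
Proof.
move=> t_gt0 t_lt1 D_gt0 q_gt0 kt_le dist.
apply: esum_le_EFin => s us; apply: gap_sum_le => //; first exact: level_sum_le.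
by have := sum_le_esum (fun i => a i ^+ 2 * `|xp i - x i| ^+ 2) us; rewrite dist lee_fin.
Qed.

Lemma gap_bound_of_in_kt (t : R) : 0 < t -> t < 1 -> in_kt a r t xp ->
  gap_bound ((2 - 2 * t) / (2 - t)) (kt_const t * fine (ktnorm a r t xp) `^ (t / (2 - t))).
Proof.
move=> t_gt0 t_lt1 xp_kt x x_l1; rewrite wnorm1_gap // wnorm2E //.
set K := kt_const t * _; set e := (2 - 2 * t) / (2 - t).
set Q := \esum_(j in [set: L]) (a j ^+ 2 * `|xp j - x j| ^+ 2)%:E.
have K_ge0 : 0 <= K by rewrite mulr_ge0 ?powR_ge0 // ltW // kt_const_gt0.
have no_gap : (forall j, r j * (`|xp j - x j| + `|xp j| - `|x j|) = 0) ->
    (\esum_(j in [set: L]) (r j * (`|xp j - x j| + `|xp j| - `|x j|))%:E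
     <= K%:E * poweR (poweR Q 2^-1) e)%E.
  by move=> gap0; rewrite esum1 => [|j _]; rewrite ?gap0 // mule_ge0 ?poweR_ge0.
have [[j0 xpj0] | xp0] := pselect (exists j, xp j != 0); last first.
  apply: no_gap => j; have [xpj0|xpj_neq0] := eqVneq (xp j) 0; last by case: xp0; exists j.
  by rewrite xpj0 sub0r normrN normr0 addr0 subrr mulr0.
have kt_gt0 := ktnorm_gt0 t a_gt0 r_gt0 xpj0.
have kt_fin : ktnorm a r t xp \is a fin_num by rewrite ge0_fin_numE // ltW.
have D_gt0 : 0 < fine (ktnorm a r t xp) by rewrite fine_gt0 // kt_gt0.
have K_gt0 : 0 < K by rewrite mulr_gt0 ?powR_gt0 // kt_const_gt0.
have e_neq0 : e != 0 by rewrite gt_eqF // divr_gt0 // subr_gt0; move: t_lt1; lra.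
have dist_ge0 j : 0 <= a j ^+ 2 * `|xp j - x j| ^+ 2 by rewrite mulr_ge0 ?sqr_ge0.
have : (0 <= Q)%E by apply: esum_ge0 => j _; rewrite lee_fin.
case dist : Q no_gap => [q| |] // no_gap q_ge0; last first.
  by rewrite poweRyr ?invr_neq0 // poweRyr // gt0_muley ?lte_fin // leey.
have [q0|q_neq0] := eqVneq q 0.
  apply: no_gap => j.
  have := sum_le_esum (fun i => a i ^+ 2 * `|xp i - x i| ^+ 2) (isT : uniq [:: j]).
  rewrite -/Q dist big_seq1 q0 lee_fin => le0; have /eqP : a j ^+ 2 * `|xp j - x j| ^+ 2 = 0.
    by apply: le_anti; rewrite le0 dist_ge0.
  rewrite mulf_eq0 !expf_eq0 /= (gt_eqF (a_gt0 j)) normr_eq0 subr_eq0 => /eqP ->.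
  by rewrite subrr normr0 add0r subrr mulr0.
rewrite !poweR_EFin -EFinM; apply: esum_gap_le; rewrite ?fineK //.
by rewrite lt_def q_neq0 -lee_fin.
Qed.

Lemma ktnorm_le_of_dominated_gap_bound (t K : R) : 0 < t -> t < 1 -> 0 < K ->
  in_lp r 1 xp -> dominated_gap_bound ((2 - 2 * t) / (2 - t)) K ->
  (ktnorm a r t xp <= (K `^ ((2 - t) / t))%:E)%E.
Proof.
move=> t_gt0 t_lt1 K_gt0 xp_l1 bound.
apply: ge_ereal_sup => _ [al al_gt0 <-].
change (al%:E * poweR (level_mass a r xp al) t^-1 <= (K `^ ((2 - t) / t))%:E)%E.
have N_ge0 : (0 <= level_mass a r xp al)%E.
  by apply: esum_ge0 => j _; rewrite lee_fin level_term_ge0.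
set x := fun j => shrink (a j ^- 2 * r j * al) (xp j).
have thr_ge0 j : 0 <= a j ^- 2 * r j * al by rewrite !mulr_ge0 ?invr_ge0 ?exprn_ge0 // ltW.
have := bound x (fun j => norm_shrink_le (xp j) (thr_ge0 j)).
rewrite /in_lp !wnorm1E // wnorm2E // in xp_l1 *.
have normE := esum_norm_shrink a r_gt0 xp al_gt0.
rewrite normE (esum_dist_shrink a_gt0 r_gt0 xp al_gt0); rewrite normE in xp_l1.
have x_fin : \esum_(j in [set: L]) (r j * `|x j|)%:E \is a fin_num.
  rewrite ge0_fin_numE; last by apply: esum_ge0 => j _; rewrite lee_fin mulr_ge0 // ltW.
  by apply: le_lt_trans xp_l1; rewrite leeDl // mule_ge0 // lee_fin ltW.
move: N_ge0 xp_l1; case: (level_mass a r xp al) => [n| |] // n_ge0 xp_l1; last first.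
  by move: xp_l1; rewrite gt0_muley ?lte_fin // -(fineK x_fin) addey ?ltxx.
rewrite addeAC subee // add0e -!EFinM !lee_fin => gap_le.
rewrite lee_fin in n_ge0; have [n0|n_neq0] := eqVneq n 0.
  by rewrite n0 powR0 ?invr_neq0 ?gt_eqF // mulr0 powR_ge0.
apply: level_le_of_gap_le gap_le => //; first by move: t_lt1; lra.
by rewrite lt_def n_neq0.
Qed.

End gap_bounds.

Theorem lemma4p2 (R : realType) (L : countType) (a r : L -> R) (xp : L -> R) (t : R)
  (ha : forall j, 0 < a j) (hr : forall j, 0 < r j)
  (hxp : in_lp r 1 xp) (ht0 : 0 < t) (ht1 : t < 1) :
  let e : R := (2 - 2 * t) / (2 - t) in
  let cond2 := fun K : R => forall x : L -> R, in_lp r 1 x ->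
      (wnorm r 1 (fun j => (xp j - x j)%R) + wnorm r 1 xp - wnorm r 1 x
       <= K%:E * poweR (wnorm a 2 (fun j => (xp j - x j)%R)) e)%E in
  let cond3 := fun K : R => forall x : L -> R, (forall j, `|x j| <= `|xp j|) ->
      (wnorm r 1 xp - wnorm r 1 x
       <= K%:E * poweR (wnorm a 2 (fun j => (xp j - x j)%R)) e)%E in
  [/\ (in_kt a r t xp <-> exists2 K, 0 < K & cond2 K),
      ((exists2 K, 0 < K & cond2 K) <-> exists2 K, 0 < K & cond3 K),
      (in_kt a r t xp ->
         cond2 ((2 + 4 * (2 `^ (1 - t) - 1)^-1) * fine (ktnorm a r t xp) `^ (t / (2 - t))))
    & (forall K, 0 < K -> cond3 K -> (ktnorm a r t xp <= (K `^ ((2 - t) / t))%:E)%E)].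
Proof.
move=> e cond2 cond3.
have kt_gap : in_kt a r t xp ->
    cond2 (kt_const t * fine (ktnorm a r t xp) `^ (t / (2 - t))).
  exact: gap_bound_of_in_kt.
have gap_dom K : cond2 K -> cond3 K := gap_bound_dominated hr hxp.
have kt_dom K : 0 < K -> cond3 K -> (ktnorm a r t xp <= (K `^ ((2 - t) / t))%:E)%E.
  by move=> K_gt0; apply: ktnorm_le_of_dominated_gap_bound.
have dom_kt K : 0 < K -> cond3 K -> in_kt a r t xp.
  by move=> K_gt0 /(kt_dom K K_gt0) kt_le; apply: le_lt_trans kt_le (ltry _).
have kt_gap_pos : in_kt a r t xp -> exists2 K, 0 < K & cond2 K.
  move=> xp_kt; exists (kt_const t * fine (ktnorm a r t xp) `^ (t / (2 - t)) + 1).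
    by rewrite ltr_wpDl // mulr_ge0 ?powR_ge0 // ltW // kt_const_gt0.
  by apply: gap_bound_le (kt_gap xp_kt); rewrite lerDl.
split => //.
- by split=> // -[K K_gt0 /gap_dom]; exact: dom_kt.
- split=> -[K K_gt0]; first by move/gap_dom; exists K.
  by move/(dom_kt K K_gt0); exact: kt_gap_pos.
Qed.
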